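(* For every integer $1\le m\le D-2$, the Markov chain on $\Sigma_m$ induced by the local automaton gate set $\mathcal G$ is irreducible: for any $S,S'\in\Sigma_m$ there is a finite sequence $u_1,\dots,u_\ell\in\mathcal G$ with $u_\ell\circ\cdots\circ u_1(S)=S'$.
   Context: Consider $N\ge3$ qubits on a ring (site indices modulo $N$), bitstrings $\mathbf z\in\{0,1\}^N$, $D=2^N$. The gate set is $\mathcal G=\{u_{iab}: i\in\{1,\dots,N\},\ a,b\in\{0,1\}\}$, where $u_{iab}$ is the permutation of $\{0,1\}^N$ that flips bit $i$ if and only if bit $i-1$ equals $a$ and bit $i+1$ equals $b$. $\Sigma_m$ is the set of subsets of $\{0,1\}^N$ of cardinality $m$, with $u(S)=\{u(\mathbf z):\mathbf z\in S\}$. The induced Markov chain has transition matrix $\Gamma_{S,S'}=\frac{1}{|\mathcal G|}\sum_{u\in\mathcal G}\delta_{S',u(S)}$. *)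

From mathcomp Require Import all_boot.
Set Implicit Arguments. Unset Strict Implicit. Unset Printing Implicit Defensive.

(* Sites of the ring are 'I_N = {0,...,N-1} (paper: 1..N), arithmetic mod N. *)
Definition bitstring (N : nat) := {ffun 'I_N -> bool}.

Definition gate (N : nat) (i : 'I_N) (a b : bool) (z : bitstring N) : bitstring N :=
  if (z (ord_pred i) == a) && (z (ordS i) == b)
  then [ffun j => if j == i then ~~ z j else z j]
  else z.

Definition gate_label (N : nat) := ('I_N * bool * bool)%type.

Definition apply_label (N : nat) (g : gate_label N) : bitstring N -> bitstring N :=
  let: (i, a, b) := g in gate i a b.

Definition act_set (N : nat) (g : gate_label N) (S : {set bitstring N}) :
  {set bitstring N} := apply_label g @: S.

Definition act_seq (N : nat) (s : seq (gate_label N)) (S : {set bitstring N}) :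
  {set bitstring N} := foldl (fun T g => act_set g T) S s.

From mathcomp Require Import all_boot fingroup perm.
From mathcomp Require Import zify.
Set Implicit Arguments. Unset Strict Implicit. Unset Printing Implicit Defensive.

(* Each gate u_{iab} is a Toffoli gate: it flips bit i when the bits of the
   control set {i-1, i+1} take prescribed values.  The group commutator
   a b a b of two Toffoli gates moves and merges their controls, which yields
   Toffoli gates with up to N - 2 arbitrary controls.  Two involutions whose
   supports meet in a single point y have as commutator a 3-cycle through y,
   a y and b y; for a gate on bit t with controls {t-1, t+1} and one on bit
   t+1 with the other N - 2 controls, this is a 3-cycle
   (y, flip_t y, flip_(t+1) y).  A 3-cycle f on {x, y, r} reproduces the
   transposition (x y) on any given set A: two of x, y, r have the same
   membership in A, so (x y)(A) is A, f(A) or f(f(A)).  Conjugating along a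
   path in the hypercube gives the action of every transposition on sets, and
   transpositions connect any two sets of equal size. *)

Section Exchange.
Variables (T : finType) (U : {set T}) (P : {set T} -> Prop).
Hypothesis P_exchange : forall (A : {set T}) x y,
  A \subset U -> x \in A -> y \in U :\: A -> P A -> P (y |: A :\ x).

Lemma exchange_ind (A B : {set T}) : A \subset U -> B \subset U -> #|A| = #|B| -> P A -> P B.
Proof.
have [n] := ubnP #|B :\: A|; elim: n A => // n IH A /ltnSE leBA sAU sBU eqAB PA.
have [|[y yBA]] := set_0Vmem (B :\: A).
  move/eqP; rewrite setD_eq0 => sBA.
  suff -> : B = A by [].
  by apply/eqP; rewrite eqEcard sBA eqAB /=.
have [x xAB] : exists x, x \in A :\: B.
  apply/card_gt0P; rewrite cardsD eqAB setIC -cardsD.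
  by apply/card_gt0P; exists y.
move: (xAB) (yBA); rewrite !inE => /andP[xB xA] /andP[yA yB].
have yUA : y \in U :\: A by rewrite inE yA (subsetP sBU).
apply: (IH (y |: A :\ x)) => //; last exact: P_exchange.
- have -> : B :\: (y |: A :\ x) = B :\: A :\ y.
    apply/setP => w; rewrite !inE; case: (eqVneq w y) => //= _.
    by case: (eqVneq w x) => [->|]; rewrite ?(negbTE xB) ?andbF.
  by move: leBA; rewrite (cardsD1 y (B :\: A)) yBA.
- by rewrite subUset sub1set (subsetP sBU) // (subset_trans (subsetDl _ _)).
- rewrite cardsU1 !inE negb_and negbK yA orbT /=.
  by move: eqAB; rewrite (cardsD1 x A) xA add1n.
Qed.

End Exchange.

Lemma imset_tperm_exchange (T : finType) (A : {set T}) x y :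
  x \in A -> y \notin A -> tperm x y @: A = y |: A :\ x.
Proof.
move=> xA yA; rewrite (can_imset_pre _ (tpermK x y)); apply/setP => w; rewrite !inE.
case: tpermP => [->|->|/eqP wx /eqP wy]; rewrite ?eqxx ?xA ?(negbTE yA) //=.
- by rewrite orbF; apply/esym/negbTE; apply: contraNneq yA => <-.
- by rewrite (negbTE wy) (negbTE wx).
Qed.

Definition cycle3 (T : eqType) (x y r z : T) : T :=
  if z == x then y else if z == y then r else if z == r then x else z.

Section Cycle3.
Variables (T : eqType) (x y r : T).
Hypotheses (xy : x != y) (xr : x != r) (yr : y != r).
Let f := cycle3 x y r.

Lemma cycle3x : f x = y. Proof. by rewrite /f /cycle3 eqxx. Qed.
Lemma cycle3y : f y = r. Proof. by rewrite /f /cycle3 (ifN_eqC _ _ xy) eqxx. Qed.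
Lemma cycle3r : f r = x.
Proof. by rewrite /f /cycle3 (ifN_eqC _ _ xr) (ifN_eqC _ _ yr) eqxx. Qed.
Lemma cycle3D z : z \notin [:: x; y; r] -> f z = z.
Proof. by rewrite !inE /f /cycle3 => /norP[/negbTE-> /norP[/negbTE-> /negbTE->]]. Qed.

Lemma cycle3K : cancel f (f \o f).
Proof.
move=> z /=; case: (boolP (z \in [:: x; y; r])) => [|zxyr]; last by rewrite !cycle3D.
by rewrite !inE => /or3P[] /eqP->; rewrite ?(cycle3x, cycle3y, cycle3r).
Qed.

End Cycle3.

Lemma imset_tperm_cycle3 (T : finType) (x y r : T) (A : {set T}) :
  x != y -> x != r -> y != r -> let f := cycle3 x y r in
  [\/ tperm x y @: A = A, tperm x y @: A = f @: A | tperm x y @: A = f @: (f @: A)].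
Proof.
move=> xy xr yr f; have fK : cancel f (f \o f) := cycle3K xy xr yr.
have ffK : cancel (f \o f) f := fK.
rewrite -imset_comp (can_imset_pre _ fK) (can_imset_pre _ ffK) (can_imset_pre _ (tpermK x y)).
have eq_preimset (g h : T -> T) : (forall w, w \notin [:: x; y; r] -> g w = h w) ->
    (g x \in A) = (h x \in A) -> (g y \in A) = (h y \in A) -> (g r \in A) = (h r \in A) ->
    g @^-1: A = h @^-1: A.
  move=> gh gx gy gr; apply/setP => w; rewrite !inE.
  by case: (boolP (w \in [:: x; y; r])) => [|/gh-> //]; rewrite !inE => /or3P[] /eqP->.
have tD w : w \notin [:: x; y; r] -> tperm x y w = w.
  by rewrite !inE => /norP[wx /norP[wy _]]; rewrite tpermD // eq_sym.
have fD w : w \notin [:: x; y; r] -> f w = w := @cycle3D _ x y r w.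
have fx : f x = y := cycle3x x y r.
have fy : f y = r := cycle3y r xy.
have fr : f r = x := cycle3r xr yr.
have tr : tperm x y r = r := tpermD xr yr.
have [exy|nxy] := eqVneq (x \in A) (y \in A).
  by apply: Or31; apply/setP => w; rewrite inE; case: tpermP => [->|->|].
have [eyr|nyr] := eqVneq (y \in A) (r \in A); [apply: Or32 | apply: Or33].
all: apply: eq_preimset => [w wD|||] /=; first by rewrite tD // !fD.
all: rewrite ?(fx, fy, fr) ?tpermL ?tpermR ?tr //.
all: by move: nxy nyr; case: (x \in A); case: (y \in A); case: (r \in A).
Qed.

Section InvolutionCommutator.
Variables (T : eqType) (a b : T -> T) (y : T).
Hypotheses (aK : involutive a) (bK : involutive b) (a_y : a y != y) (b_y : b y != y).
Hypothesis supp_ab : forall z, a z != z -> b z != z -> z = y.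

Let fix_a z : z != y -> b z != z -> a z = z.
Proof. by move=> zy bz; apply/eqP/negbNE; apply: contra zy => az; rewrite (supp_ab az bz). Qed.

Let fix_b z : z != y -> a z != z -> b z = z.
Proof. by move=> zy az; apply/eqP/negbNE; apply: contra zy => bz; rewrite (supp_ab az bz). Qed.

Lemma commutator_involutions z : a (b (a (b z))) = cycle3 y (a y) (b y) z.
Proof.
have b_ay : b (a y) = a y by apply: fix_b; rewrite ?aK // eq_sym.
have a_by : a (b y) = b y by apply: fix_a; rewrite ?bK // eq_sym.
rewrite /cycle3; case: eqVneq => [->|zy]; first by rewrite a_by bK.
case: eqVneq => [->|zay]; first by rewrite b_ay aK a_by.
case: eqVneq => [->|zby]; first by rewrite bK b_ay aK.
have [bz|bz] := eqVneq (b z) z.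
  rewrite bz; have [az|az] := eqVneq (a z) z; first by rewrite az bz az.
  have azy : a z != y by apply: contra zay => /eqP <-; rewrite aK.
  by rewrite fix_b ?aK // eq_sym.
have bzy : b z != y by apply: contra zby => /eqP <-; rewrite bK.
by rewrite (fix_a bzy) ?bK ?fix_a // eq_sym.
Qed.

End InvolutionCommutator.

Section Bitstrings.
Variable N : nat.
Implicit Types (t s j : 'I_N) (C : {set 'I_N}) (c z w : bitstring N).

Definition flip t z : bitstring N := [ffun j => if j == t then ~~ z j else z j].

Definition cflip t (P : pred (bitstring N)) z := if P z then flip t z else z.

Definition agree C c z := [forall j in C, z j == c j].

Definition toffoli t C c := cflip t (agree C c).

Definition flip_invariant t (P : pred (bitstring N)) := forall z, P (flip t z) = P z.

Lemma flip_in t z : flip t z t = ~~ z t.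
Proof. by rewrite ffunE eqxx. Qed.

Lemma flip_out t j z : j != t -> flip t z j = z j.
Proof. by rewrite ffunE => /negbTE->. Qed.

Lemma flipK t : involutive (flip t).
Proof. by move=> z; apply/ffunP => j; rewrite !ffunE; case: eqP => // _; rewrite negbK. Qed.

Lemma flipC s t z : flip s (flip t z) = flip t (flip s z).
Proof. by apply/ffunP => j; rewrite !ffunE; case: eqP; case: eqP. Qed.

Lemma flip_neq t z : flip t z != z.
Proof. by apply/eqP => /ffunP /(_ t); rewrite flip_in; case: (z t). Qed.

Lemma agree_flip t C c : t \notin C -> flip_invariant t (agree C c).
Proof.
move=> tC z; apply: eq_forallb_in => j jC.
by rewrite flip_out //; apply: contraNneq tC => <-.
Qed.

Lemma agree_refl C c : agree C c c.
Proof. by apply/forall_inP. Qed.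

Lemma agreeU A B c z : agree (A :|: B) c z = agree A c z && agree B c z.
Proof.
apply/forall_inP/andP => [H|[/forall_inP HA /forall_inP HB] j].
  by split; apply/forall_inP => j jX; apply: H; rewrite inE jX ?orbT.
by rewrite inE => /orP[/HA|/HB].
Qed.

Lemma agree1 j c z : agree [set j] c z = (z j == c j).
Proof.
apply/forall_inP/idP => [-> //|E i]; first by rewrite inE.
by rewrite inE => /eqP->.
Qed.

Lemma agreeT c z : agree setT c z = (z == c).
Proof.
apply/forall_inP/eqP => [H|-> //]; apply/ffunP => j.
by apply/eqP/H; rewrite inE.
Qed.

Lemma agreeD1 s C c z : s \in C -> agree C c z = (z s == c s) && agree (C :\ s) c z.
Proof. by move=> sC; rewrite -agree1 -agreeU setD1K. Qed.

Lemma agree_flip_neq s C c z : s \in C ->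
  (agree C c (flip s z) != agree C c z) = agree (C :\ s) c z.
Proof.
move=> sC; rewrite !(agreeD1 _ _ sC) agree_flip ?setD11 // flip_in.
by case: (agree _ _ z); case: (z s); case: (c s).
Qed.

Lemma cflipK t P : flip_invariant t P -> involutive (cflip t P).
Proof.
by move=> Pt z; rewrite /cflip; case Pz: (P z) => /=; rewrite ?Pt Pz /= ?flipK.
Qed.

Lemma cflip_xor t P Q : flip_invariant t P -> flip_invariant t Q ->
  cflip t P \o cflip t Q =1 cflip t (fun z => P z (+) Q z).
Proof.
move=> Pt Qt z; rewrite /cflip /=.
by case: (Q z); rewrite ?Pt; case: (P z); rewrite ?flipK.
Qed.

Lemma cflip_commutator s t P Q : s != t -> flip_invariant t P ->
    flip_invariant s Q -> flip_invariant t Q ->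
  cflip t P \o cflip s Q \o cflip t P \o cflip s Q
  =1 cflip t (fun z => Q z && (P (flip s z) != P z)).
Proof.
move=> st Pt Qs Qt z /=.
have QPt w : Q (cflip t P w) = Q w by rewrite /cflip; case: (P w); rewrite ?Qt.
have [Qz|nQz] := boolP (Q z).
  rewrite {2 4}/cflip Qz /= QPt Qs Qz /cflip Qz /=.
  case: (P (flip s z)); [rewrite flipC flipK Pt | rewrite flipK];
    by case: (P z); rewrite ?flipK.
rewrite {2 4}/cflip (negbTE nQz) /= QPt (negbTE nQz) /= (cflipK Pt).
by rewrite /cflip (negbTE nQz).
Qed.

Lemma toffoliK t C c : t \notin C -> involutive (toffoli t C c).
Proof. by move=> tC; apply/cflipK/agree_flip. Qed.

Lemma toffoli_moved t C c z : (toffoli t C c z != z) = agree C c z.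
Proof. by rewrite /toffoli /cflip; case: (agree C c z); rewrite ?flip_neq ?eqxx. Qed.

Lemma toffoli_commutator t s C C' c : s \in C -> t \notin C -> s \notin C' -> t \notin C' ->
  toffoli t C c \o toffoli s C' c \o toffoli t C c \o toffoli s C' c
  =1 toffoli t (C' :|: C :\ s) c.
Proof.
move=> sC tC sC' tC' z.
have st : s != t by apply: contraNneq tC => <-.
have Pt : flip_invariant t (agree C c) by apply: agree_flip.
have Qs : flip_invariant s (agree C' c) by apply: agree_flip.
have Qt : flip_invariant t (agree C' c) by apply: agree_flip.
by rewrite cflip_commutator // /toffoli /cflip /= agree_flip_neq // agreeU.
Qed.

End Bitstrings.

Section CyclicSuccessor.
Variables (N : nat) (t : 'I_N).

Lemma val_iter_ordS i : val (iter i (@ordS N) t) = (t + i) %% N.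
Proof.
elim: i => [|i IH] /=; first by rewrite addn0 modn_small.
by rewrite IH -addn1 modnDml addn1 addnS.
Qed.

Lemma iter_ordS_neq i : 0 < i < N -> iter i (@ordS N) t != t.
Proof.
case/andP=> i0 iN; apply/eqP => /(congr1 val); rewrite val_iter_ordS => e.
have : t + i == t + 0 %[mod N] by rewrite e addn0 modn_small.
by rewrite eqn_modDl mod0n modn_small // => /eqP i_eq0; rewrite i_eq0 in i0.
Qed.

Lemma iter_ordS_onto j : exists2 i, i < N & iter i (@ordS N) t = j.
Proof.
have N0 : 0 < N by apply: leq_ltn_trans (ltn_ord t).
exists ((j + (N - t)) %% N); first exact: ltn_pmod.
apply: val_inj; rewrite val_iter_ordS modnDmr addnCA subnKC ?modnDr ?modn_small //.
exact: ltnW.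
Qed.

End CyclicSuccessor.

Section Realizable.
Variable N : nat.
Implicit Types (z : bitstring N) (f g : bitstring N -> bitstring N) (A B : {set bitstring N}).

Definition run (us : seq (gate_label N)) z := foldl (fun w u => apply_label u w) z us.

Definition realizable f := exists us, run us =1 f.

Definition reachable A B := exists us, act_seq us A = B.

Lemma run_cat us1 us2 z : run (us1 ++ us2) z = run us2 (run us1 z).
Proof. exact: foldl_cat. Qed.

Lemma realizable_comp f g : realizable f -> realizable g -> realizable (f \o g).
Proof. by move=> [uf Hf] [ug Hg]; exists (ug ++ uf) => z; rewrite run_cat Hg Hf. Qed.

Lemma realizable_eq f g : f =1 g -> realizable f -> realizable g.
Proof. by move=> fg [us Hus]; exists us => z; rewrite Hus. Qed.

Lemma realizable_commutator f g : realizable f -> realizable g -> realizable (f \o g \o f \o g).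
Proof. by move=> Rf Rg; do 3!apply: realizable_comp => //. Qed.

Lemma act_seq_run us A : act_seq us A = run us @: A.
Proof.
elim: us A => [|u us IH] A /=; first by rewrite imset_id.
by rewrite /act_seq /= -/(act_seq us _) IH /act_set -imset_comp.
Qed.

Lemma reachable_refl A : reachable A A.
Proof. by exists [::]. Qed.

Lemma reachable_trans A B D : reachable A B -> reachable B D -> reachable A D.
Proof. by move=> [us1 <-] [us2 <-]; exists (us1 ++ us2); rewrite /act_seq foldl_cat. Qed.

Lemma reachable_imset f A : realizable f -> reachable A (f @: A).
Proof. by move=> [us Hus]; exists us; rewrite act_seq_run; apply: eq_imset. Qed.

End Realizable.

Section Toffoli.
Variables (N : nat) (c : bitstring N).
Hypothesis N_gt2 : 2 < N.
Implicit Types (t s j : 'I_N) (C : {set 'I_N}).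

Lemma ordS_neq t : ordS t != t.
Proof. exact: (@iter_ordS_neq _ t 1 (ltnW N_gt2)). Qed.

Lemma ord_pred_neq t : ord_pred t != t.
Proof. by apply: contraNneq (ordS_neq t) => e; rewrite -{1}e ord_predK. Qed.

Lemma ordS_neq_pred t : ordS t != ord_pred t.
Proof.
by apply: contraNneq (@iter_ordS_neq _ t 2 N_gt2) => e /=; rewrite e ord_predK.
Qed.

Lemma realizable_gate t a b : realizable (gate t a b).
Proof. by exists [:: (t, a, b)]. Qed.

Lemma gate_cflip t a b :
  gate t a b = cflip t (fun z => (z (ord_pred t) == a) && (z (ordS t) == b)).
Proof. by []. Qed.

Lemma toffoli_neighbours t : realizable (toffoli t [set ord_pred t; ordS t] c).
Proof.
apply: realizable_eq (realizable_gate t (c (ord_pred t)) (c (ordS t))) => z.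
by rewrite gate_cflip /toffoli /cflip agreeU !agree1.
Qed.

Lemma toffoli_succ t : realizable (toffoli t [set ordS t] c).
Proof.
set b := c (ordS t).
apply: realizable_eq (realizable_comp (realizable_gate t true b) (realizable_gate t false b)).
have inv (a : bool) : flip_invariant t (fun z => (z (ord_pred t) == a) && (z (ordS t) == b)).
  by move=> z; rewrite !flip_out ?ord_pred_neq ?ordS_neq.
move=> z; rewrite !gate_cflip cflip_xor // /toffoli /cflip agree1.
by case: (z (ord_pred t)); rewrite /= ?addbF.
Qed.

Lemma realizable_toffoli_commutator t s C C' :
    realizable (toffoli t C c) -> realizable (toffoli s C' c) ->
    s \in C -> t \notin C -> s \notin C' -> t \notin C' ->
  realizable (toffoli t (C' :|: C :\ s) c).
Proof.
move=> RC RC' sC tC sC' tC'.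
exact: realizable_eq (toffoli_commutator c sC tC sC' tC') (realizable_commutator RC RC').
Qed.

Lemma toffoli_single t j : j != t -> realizable (toffoli t [set j] c).
Proof.
have [i iN <-{j}] := iter_ordS_onto t j.
(* Walk the control from t+1 around the ring, one site at a time. *)
elim: i iN => [|i IH] iN; first by rewrite eqxx.
case: (posnP i) => [-> _|i0 St]; first exact: toffoli_succ.
set s := iter i (@ordS N) t in IH St *.
have st : s != t by apply: iter_ordS_neq; rewrite i0 ltnW.
have := realizable_toffoli_commutator (IH (ltnW iN) st) (toffoli_succ s) (set11 s).
by rewrite setDv setU0; apply; rewrite !inE eq_sym ?ordS_neq.
Qed.

Lemma toffoli_swap t C s j : realizable (toffoli t C c) ->
  s \in C -> t \notin C -> j != t -> j != s -> realizable (toffoli t (j |: C :\ s) c).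
Proof.
move=> RC sC tC jt js.
by apply: realizable_toffoli_commutator (toffoli_single js) _ _ _ _; rewrite // inE eq_sym.
Qed.

Lemma toffoli_exchange t C C' : realizable (toffoli t C c) ->
  t \notin C -> t \notin C' -> #|C| = #|C'| -> realizable (toffoli t C' c).
Proof.
have subC1 (D : {set 'I_N}) : (D \subset ~: [set t]) = (t \notin D).
  by rewrite subsetC sub1set inE.
move=> RC tC tC' CC'.
apply: (@exchange_ind _ (~: [set t]) (fun D => realizable (toffoli t D c))) RC; rewrite ?subC1 //.
move=> D s j; rewrite subC1 !inE => tD sD /andP[jD jt] RD.
by apply: toffoli_swap; rewrite // eq_sym; apply: contraNneq jD => <-.
Qed.

Lemma toffoli_pair t C : t \notin C -> #|C| = 2 -> realizable (toffoli t C c).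
Proof.
move=> tC C2; apply: toffoli_exchange (toffoli_neighbours t) _ tC _.
  by rewrite !inE negb_or !(eq_sym t) ord_pred_neq ordS_neq.
by rewrite C2 cards2 eq_sym ordS_neq_pred.
Qed.

Lemma realizable_toffoli t C : t \notin C -> 0 < #|C| <= N - 2 -> realizable (toffoli t C c).
Proof.
have [n] := ubnP #|C|; elim: n t C => // n IH t C /ltnSE leCn tC /andP[C0 CN].
case: (ltngtP #|C| 2) => [C_lt2|C_gt2|]; last exact: toffoli_pair.
  have /cards1P[j Cj] : #|C| == 1 by rewrite eqn_leq -ltnS C_lt2 C0.
  by move: tC; rewrite Cj inE eq_sym; apply: toffoli_single.
have [j jC] : exists j, j \in C by apply/card_gt0P.
(* The bound #|C| <= N - 2 leaves a free site s to route the commutator through. *)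
have [s] : exists s, s \in ~: (t |: C).
  apply/card_gt0P; rewrite cardsCs setCK card_ord cardsU1 tC /=.
  by move: CN; set k := #|C|; lia.
rewrite !inE negb_or eq_sym => /andP[ts sC].
have tj : t != j by apply: contraNneq tC => ->.
have sj : s != j by apply: contraNneq sC => ->.
have R1 : realizable (toffoli t [set s; j] c).
  by apply: toffoli_pair; rewrite ?cards2 ?sj // !inE negb_or ts.
have R2 : realizable (toffoli s (C :\ j) c).
  have Cj : #|C| = #|C :\ j|.+1 by rewrite (cardsD1 j C) jC.
  apply: IH; rewrite ?inE ?(negbTE sC) ?andbF -?Cj //.
  by move: C_gt2 CN; rewrite Cj; lia.
have := realizable_toffoli_commutator R1 R2 (set21 s j).
rewrite setU1K ?inE // setUC setD1K //.
by apply; rewrite ?negb_or ?ts ?tj ?(negbTE sC) ?(negbTE tC) ?andbF.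
Qed.

End Toffoli.

Section Reachability.
Variable N : nat.
Hypothesis N_gt2 : 2 < N.
Implicit Types (t : 'I_N) (x y : bitstring N) (A B : {set bitstring N}).

Lemma realizable_cycle3 y t : realizable (cycle3 y (flip t y) (flip (ordS t) y)).
Proof.
set C := [set ord_pred t; ordS t].
have tC : t \notin C by rewrite !inE negb_or !(eq_sym t) ord_pred_neq ?ordS_neq.
have sC : ordS t \notin ~: C by rewrite !inE eqxx orbT.
have Ra : realizable (toffoli t C y) := toffoli_neighbours y t.
have Rb : realizable (toffoli (ordS t) (~: C) y).
  apply: realizable_toffoli => //; have := cardsC C.
  rewrite cards2 eq_sym ordS_neq_pred // card_ord /=; set k := #|~: C|; lia.
apply: realizable_eq (realizable_commutator Ra Rb) => z /=.
rewrite (commutator_involutions (y := y) (toffoliK _ tC) (toffoliK _ sC));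
  rewrite ?toffoli_moved ?agree_refl //.
  by rewrite /toffoli /cflip !agree_refl.
(* The supports {agree C y} and {agree (~: C) y} meet only in y. *)
move=> w; rewrite !toffoli_moved => Cw Cw'; apply/eqP.
by rewrite -agreeT -(setUCr C) agreeU Cw.
Qed.

Lemma reachable_tperm_flip A y t : reachable A (tperm y (flip t y) @: A).
Proof.
have yt : y != flip t y by rewrite eq_sym flip_neq.
have ys : y != flip (ordS t) y by rewrite eq_sym flip_neq.
have ts : flip t y != flip (ordS t) y.
  apply/eqP => /ffunP /(_ t); rewrite flip_in flip_out 1?eq_sym ?ordS_neq //.
  by case: (y t).
have Rf := realizable_cycle3 y t.
case: (imset_tperm_cycle3 A yt ys ts) => ->; first exact: reachable_refl.
  exact: reachable_imset.
exact: reachable_trans (reachable_imset _ Rf) (reachable_imset _ Rf).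
Qed.

Lemma reachable_tperm A x y : reachable A (tperm x y @: A).
Proof.
have [n] := ubnP #|[set i | x i != y i]|; elim: n x A => // n IH x A /ltnSE.
have [/setP D0 _|[i]] := set_0Vmem [set i | x i != y i].
  have -> : y = x by apply/ffunP => i; move: (D0 i); rewrite !inE => /negbFE/eqP.
  by rewrite tperm1 (eq_imset _ (@perm1 _)) imset_id; apply: reachable_refl.
rewrite inE => xyi; set x' := flip i x => Dn.
have [<-|x'y] := eqVneq x' y; first exact: reachable_tperm_flip.
have xy : x != y by apply: contraNneq xyi => ->.
have D' : #|[set j | x' j != y j]| < n.
  have -> : [set j | x' j != y j] = [set j | x j != y j] :\ i.
    apply/setP => j; rewrite !inE /x'; case: (eqVneq j i) => [->|ji] /=.
      by rewrite flip_in; move: xyi; case: (x i); case: (y i).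
    by rewrite flip_out.
  by move: Dn; rewrite (cardsD1 i [set j | _]) inE xyi.
have -> : tperm x y @: A = tperm x x' @: (tperm x' y @: (tperm x x' @: A)).
  rewrite -!imset_comp; apply: eq_imset => w /=.
  by rewrite -(tpermJ_tperm x'y xy) conjgE tpermV !permM tpermC.
apply: reachable_trans (reachable_tperm_flip _ x i) _.
exact: reachable_trans (IH _ _ D') (reachable_tperm_flip _ x i).
Qed.

Lemma reachable_card A B : #|A| = #|B| -> reachable A B.
Proof.
move=> AB; apply: (@exchange_ind _ setT (reachable A)) (reachable_refl A) => //.
move=> D x y _ xD; rewrite !inE andbT => yD RD.
by rewrite -imset_tperm_exchange //; apply: reachable_trans RD (reachable_tperm _ _ _).
Qed.

End Reachability.

Theorem lemma3 (N : nat) (hN : 3 <= N) (m : nat)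
  (hm1 : 1 <= m) (hm2 : m <= 2 ^ N - 2)
  (S S' : {set bitstring N}) (hS : #|S| = m) (hS' : #|S'| = m) :
  exists s : seq (gate_label N), act_seq s S = S'.
Proof.
exact: reachable_card hN S S' (etrans hS (esym hS')).
Qed.
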